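(* If $q$ is a power of an odd prime, then $\chi(G_{q^3})\le 6q^2$; consequently $\chi(ER_{q^3})\le 6q^2+1$.
   Context: For a power $Q$ of an odd prime, the graph $G_Q$ has vertex set $\mathbb{F}_Q\times\mathbb{F}_Q$, and distinct vertices $(x_1,x_2)$, $(y_1,y_2)$ are adjacent if and only if $(x_1+y_1)^2=x_2+y_2$; $G_Q$ has no loops. $ER_Q$ is the graph whose vertices are the $1$-dimensional subspaces of $\mathbb{F}_Q^3$, where distinct vertices $(x_0,x_1,x_2)$, $(y_0,y_1,y_2)$ (homogeneous coordinates) are adjacent if and only if $x_0y_0+x_1y_1+x_2y_2=0$. $\chi$ denotes the chromatic number. *)

From HB Require Import structures.
From mathcomp Require Import all_boot all_order all_algebra all_field.
Set Implicit Arguments. Unset Strict Implicit. Unset Printing Implicit Defensive.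
Import GRing.Theory.
Local Open Scope ring_scope.

Definition colorable (T : finType) (e : rel T) (n : nat) : bool :=
  [exists f : {ffun T -> 'I_n},
     [forall x : T, forall y : T, ((x != y) && e x y) ==> (f x != f y)]].

Lemma colorable_card (T : finType) (e : rel T) : exists n, colorable e n.
Proof.
exists #|T|; apply/existsP; exists [ffun x => enum_rank x].
apply/forallP => x; apply/forallP => y; apply/implyP => /andP [xy _].
rewrite !ffunE; apply: contra xy => /eqP /enum_rank_inj ->; exact: eqxx.
Qed.

Definition chromatic_number (T : finType) (e : rel T) : nat :=
  ex_minn (colorable_card e).

Definition G_adj (F : finFieldType) : rel (F * F) :=
  fun x y => (x != y) && ((x.1 + y.1) ^+ 2 == x.2 + y.2).

(* ER_Q : vertices are the 1-dimensional subspaces of F^3, each represented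
   as the set of its vectors {c v | c in F} for some nonzero v. *)
Definition is_line (F : finFieldType) (A : {set 'rV[F]_3}) : bool :=
  [exists v : 'rV[F]_3, (v != 0) && (A == [set c *: v | c in F])].

Definition ER_vertex (F : finFieldType) := {A : {set 'rV[F]_3} | is_line A}.

Definition dot3 (F : finFieldType) (u w : 'rV[F]_3) : F :=
  \sum_(i < 3) u 0 i * w 0 i.

Definition ER_adj (F : finFieldType) : rel (ER_vertex F) :=
  fun A B => (A != B) &&
    [forall u : 'rV[F]_3, forall w : 'rV[F]_3,
       ((u \in val A) && (w \in val B)) ==> (dot3 u w == 0)].

From HB Require Import structures.
From mathcomp Require Import all_boot all_order all_algebra all_field.
From mathcomp Require Import zify ring.
Set Implicit Arguments. Unset Strict Implicit. Unset Printing Implicit Defensive.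
Import GRing.Theory.
Local Open Scope ring_scope.

(* Let K = F_q be the subfield of F = F_(q^3) fixed by z |-> z^q.  The defect
   g(x, y) = y - 2 x^2 turns adjacency in G into g(v) + g(w) = -(v.1 - w.1)^2.
   Vertices with g(v) in K get the colour (v.1 - rep(v.1), g(v)), where rep picks
   representatives of F/K; the others get (rep(v.1), a choice of one coset of each
   pair {g + K, -g + K}).  Because [F : K] = 3 is odd, a square lies in K only if
   its root does, which makes both families proper: q^2 + 2 q^2 colours.
   For ER_Q choose a^2 + b^2 = -1.  In the coordinates P = a x0 + b x1 + x2,
   R = -a x0 - b x1 + x2, S = -b x0 + a x1 the form x0 y0 + x1 y1 + x2 y2 becomes
   (P R' + R P')/2 - S S', so the lines with P <> 0
   are mapped into G by u |-> (S/P, R/P + (S/P)^2), orthogonality becoming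
   adjacency; the lines with P = 0 need one more colour. *)

Lemma colorable_of (T C : finType) (e : rel T) (c : T -> C) (S : {set C}) n :
  (forall x, c x \in S) -> (forall x y, x != y -> e x y -> c x != c y) ->
  (#|S| <= n)%N -> colorable e n.
Proof.
move=> cS ce Sn; apply/existsP.
exists [ffun x => widen_ord Sn (enum_rank_in (cS x) (c x))].
apply/forallP => x; apply/forallP => y; apply/implyP => /andP [xy exy].
rewrite !ffunE; apply: contra (ce x y xy exy) => /eqP/(congr1 val)/= eq_rk.
have {}eq_rk : enum_rank_in (cS x) (c x) = enum_rank_in (cS y) (c y).
  exact: val_inj.
by rewrite -(enum_rankK_in (cS x) (cS x)) eq_rk enum_rankK_in.
Qed.

Lemma chromatic_number_le (T : finType) (e : rel T) n :
  colorable e n -> (chromatic_number e <= n)%N.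
Proof. by rewrite /chromatic_number; case: ex_minnP => m _; apply. Qed.

Lemma enum_rank_ltC (T : finType) (x y : T) : x != y ->
  (enum_rank x < enum_rank y)%N = ~~ (enum_rank y < enum_rank x)%N.
Proof.
move=> xy; rewrite -leqNgt [RHS]leq_eqVlt (inj_eq (@ord_inj _)).
by rewrite (inj_eq enum_rank_inj) (negbTE xy).
Qed.

Lemma card_roots_lt (R : finIdomainType) (A : {set R}) (P : {poly R}) :
  P != 0 -> {in A, forall z, root P z} -> (#|A| < size P)%N.
Proof.
move=> P0 AP; rewrite cardE; apply: max_poly_roots (enum_uniq _) => //.
by apply/allP => z; rewrite mem_enum; apply: AP.
Qed.

Section CosetRepresentatives.
Variables (V : finZmodType) (K : {set V}).
Hypotheses (K0 : 0 \in K) (KB : {in K &, forall x y, x - y \in K}).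

Definition coset_rep (x : V) : V :=
  [arg min_(y < x | y - x \in K) (enum_rank y : nat)].

Let KN x : x \in K -> - x \in K.
Proof. by move=> Kx; rewrite -sub0r KB. Qed.

Let KD x y : x \in K -> y \in K -> x + y \in K.
Proof. by move=> Kx Ky; rewrite -[y]opprK KB ?KN. Qed.

Lemma coset_rep_sub x : coset_rep x - x \in K.
Proof. by rewrite /coset_rep; case: arg_minnP; rewrite ?subrr. Qed.

Lemma coset_rep_eq x y : x - y \in K -> coset_rep x = coset_rep y.
Proof.
move=> Kxy; rewrite /coset_rep.
case: arg_minnP; first by rewrite subrr.
move=> a Ka min_a; case: arg_minnP; first by rewrite subrr.
move=> b Kb min_b.
have Kay : a - y \in K by rewrite -(subrK x a) -addrA KD.
have Kbx : b - x \in K by rewrite -(subrK y b) -addrA KD // -opprB KN.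
apply/enum_rank_inj/val_inj/eqP; rewrite eqn_leq.
by rewrite min_a // min_b.
Qed.

Lemma eq_coset_rep x y : (coset_rep x == coset_rep y) = (x - y \in K).
Proof.
apply/eqP/idP => [eq_rep|]; last exact: coset_rep_eq.
have -> : x - y = (coset_rep y - y) - (coset_rep x - x).
  by rewrite eq_rep opprB [RHS]addrC addrA subrK.
by rewrite KB ?coset_rep_sub.
Qed.

Lemma coset_repK x : coset_rep (coset_rep x) = coset_rep x.
Proof. exact/coset_rep_eq/coset_rep_sub. Qed.

(* Selects one coset out of each pair {g + K, -g + K} of distinct cosets. *)
Definition coset_sign (g : V) : bool :=
  (enum_rank (coset_rep g) < enum_rank (coset_rep (- g)))%N.

Lemma coset_sign_opp g h : g + h \in K -> coset_rep g != coset_rep (- g) ->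
  coset_sign h = ~~ coset_sign g.
Proof.
move=> Kgh neq_g.
have rep_h : coset_rep h = coset_rep (- g) by apply: coset_rep_eq; rewrite opprK addrC.
have rep_Nh : coset_rep (- h) = coset_rep g by apply: coset_rep_eq; rewrite -opprD KN // addrC.
by rewrite /coset_sign rep_h rep_Nh enum_rank_ltC // eq_sym.
Qed.

End CosetRepresentatives.

Lemma exprBn_pchar (R : comNzRingType) (x y : R) n :
  [pchar R].-nat n -> (x - y) ^+ n = x ^+ n - y ^+ n.
Proof. by move=> n_char; rewrite exprDn_pchar // exprNn_pchar. Qed.

Lemma pchar_odd_two_neq0 (R : nzRingType) p : p \in [pchar R] -> odd p -> (2 : R) != 0.
Proof.
move=> pR; apply: contraTneq => two0.
have := dvdn_pcharf pR 2; rewrite two0 eqxx dvdn_prime2 ?(pcharf_prime pR) //.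
by move/eqP->.
Qed.

Section PowFixed.
Variables (F : finFieldType) (q : nat).
Hypotheses (q_char : [pchar F].-nat q) (q_gt1 : (1 < q)%N).

Definition pow_fixed : {set F} := [set z | z ^+ q == z].
Local Notation K := pow_fixed.

Lemma pow_fixed0 : 0 \in K.
Proof. by rewrite inE expr0n gtn_eqF // ltnW. Qed.

Lemma pow_fixedN x : x \in K -> - x \in K.
Proof. by rewrite !inE exprNn_pchar // => /eqP->. Qed.

Lemma pow_fixedD x y : x \in K -> y \in K -> x + y \in K.
Proof. by rewrite !inE exprDn_pchar // => /eqP-> /eqP->. Qed.

Lemma pow_fixedB : {in K &, forall x y, x - y \in K}.
Proof. by move=> x y Kx Ky; rewrite pow_fixedD ?pow_fixedN. Qed.

Lemma pow_fixedM x y : x \in K -> y \in K -> x * y \in K.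
Proof. by rewrite !inE exprMn => /eqP-> /eqP->. Qed.

Lemma pow_fixed_double g : (2 : F) != 0 -> g *+ 2 \in K -> g \in K.
Proof.
move=> two; rewrite !inE -mulr_natl exprMn => /eqP eq2g; apply/eqP/(mulfI two).
have : 2 \in K by rewrite inE -[2]/(1 + 1 : F) exprDn_pchar // expr1n.
by rewrite inE => /eqP two_fixed; rewrite -eq2g two_fixed.
Qed.

Lemma card_pow_fixed : (#|K| <= q)%N.
Proof.
have size_XqX : size ('X^q - 'X : {poly F}) = q.+1.
  by rewrite size_polyDl size_polyXn // size_polyN size_polyX.
rewrite -ltnS -size_XqX; apply: card_roots_lt; first by rewrite -size_poly_gt0 size_XqX.
by move=> z; rewrite inE rootE !hornerE subr_eq0.
Qed.

Hypothesis cardF : #|F| = (q ^ 3)%N.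

(* If z^q = -z then z = z^(q^3) = -z, hence z = 0. *)
Lemma pow_fixed_sqr z : (2 : F) != 0 -> z ^+ 2 \in K -> z \in K.
Proof.
move=> two; rewrite !inE -exprM mulnC exprM => /eqP z2_fixed.
have : (z ^+ q - z) * (z ^+ q + z) == 0 by rewrite -subr_sqr z2_fixed subrr.
rewrite mulf_eq0 subr_eq0 addr_eq0 => /orP [//| /eqP zqN].
have zN : z = - z.
  have := expf_card z; rewrite cardF expnS exprM zqN expnS expn1 exprM.
  by rewrite exprNn_pchar // zqN opprK zqN => ->.
have : 2 * z == 0 by rewrite mulr_natl mulr2n {1}zN addNr.
by rewrite mulf_eq0 (negbTE two) => /eqP z0; rewrite zqN z0 oppr0.
Qed.

(* z |-> z^q - z is injective on coset representatives and its values are roots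
   of X^(q^2) + X^q + X, since (z^q - z)^(q^2) + (z^q - z)^q + (z^q - z) = z^(q^3) - z. *)
Lemma card_coset_reps : (#|[set r | coset_rep K r == r]| <= q ^ 2)%N.
Proof.
pose T : {poly F} := 'X^(q ^ 2) + ('X^q + 'X).
have size_T : size T = (q ^ 2).+1.
  have size_XqX : size ('X^q + 'X : {poly F}) = q.+1.
    by rewrite size_polyDl size_polyXn // size_polyX.
  by rewrite size_polyDl size_polyXn // size_XqX ltnS expnS expn1 ltn_Pmull // ltnW.
have q2_char : [pchar F].-nat (q ^ 2)%N by rewrite pnatX q_char.
have T_root z : root T (z ^+ q - z).
  rewrite rootE !(hornerD, hornerXn, hornerX) !exprBn_pchar // -!exprM mulnn.
  rewrite -expnS -cardF expf_card.
  by apply/eqP; ring.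
have coset_inj : {in [set r | coset_rep K r == r] &, injective (fun r => r ^+ q - r)}.
  move=> r r'; rewrite !inE => /eqP rr /eqP rr' eq_img.
  rewrite -rr -rr'; apply/eqP; rewrite (eq_coset_rep pow_fixed0 pow_fixedB) inE.
  have img : r ^+ q = r' ^+ q - r' + r by rewrite -eq_img subrK.
  by rewrite exprBn_pchar // img; apply/eqP; ring.
rewrite -ltnS -size_T -(card_in_imset coset_inj); apply: card_roots_lt.
  by rewrite -size_poly_gt0 size_T.
by move=> _ /imsetP [z _ ->]; apply: T_root.
Qed.
End PowFixed.

Section GColouring.
Variables (F : finFieldType) (q : nat).
Hypotheses (q_char : [pchar F].-nat q) (q_gt1 : (1 < q)%N).
Hypotheses (cardF : #|F| = (q ^ 3)%N) (two : (2 : F) != 0).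

Local Notation K := (pow_fixed F q).
Local Notation rep := (coset_rep K).
Let K0 := pow_fixed0 F q_gt1.
Let KB := pow_fixedB q_char.
Let KN := pow_fixedN q_char.

Definition defect (v : F * F) : F := v.2 - 2 * v.1 ^+ 2.

Lemma defect_adj (v w : F * F) : (v.1 + w.1) ^+ 2 = v.2 + w.2 ->
  defect v + defect w = - (v.1 - w.1) ^+ 2.
Proof.
move=> adj_vw; rewrite (_ : defect v + defect w = v.2 + w.2 - 2 * v.1 ^+ 2 - 2 * w.1 ^+ 2).
  by rewrite -adj_vw; ring.
by rewrite /defect; ring.
Qed.

Definition G_colour (v : F * F) : (F * bool) + (F * F) :=
  if defect v \in K then inr (v.1 - rep v.1, defect v)
  else inl (rep v.1, coset_sign K (defect v)).

Lemma G_colour_neq v w : v != w -> G_adj v w -> G_colour v != G_colour w.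
Proof.
case: v w => [x x2] [y y2] vw /andP [_ /eqP/defect_adj/= sum_defect].
rewrite /G_colour /=; set g := defect (x, x2); set g' := defect (y, y2).
case: ifP => gK; case: ifP => g'K //; apply/negP => /eqP [eq_rep eq_col].
- have sqr_K : (x - y) ^+ 2 \in K.
    by rewrite -[_ ^+ 2]opprK -sum_defect; apply/KN/pow_fixedD.
  have := pow_fixed_sqr q_char cardF two sqr_K.
  rewrite -(eq_coset_rep K0 KB) => /eqP eq_rep'.
  have exy : x = y by move: eq_rep; rewrite eq_rep' => /addIr.
  have ex2 : x2 = y2 by move: eq_col; rewrite /g /g' /defect exy => /addIr.
  by move: vw; rewrite exy ex2 eqxx.
- have sum_K : g + g' \in K.
    move: eq_rep => /eqP; rewrite (eq_coset_rep K0 KB) => xy_K.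
    by rewrite sum_defect; apply/KN/pow_fixedM.
  have rep_gN : rep g != rep (- g).
    by rewrite (eq_coset_rep K0 KB) opprK -mulr2n; apply: contraFN gK; apply: pow_fixed_double.
  by move: eq_col; rewrite (coset_sign_opp K0 KB sum_K rep_gN); case: coset_sign.
Qed.

Lemma G_colorable : colorable (@G_adj F) (3 * q ^ 2).
Proof.
pose R := [set r | rep r == r].
pose S : {set (F * bool) + (F * F)} := inl @: setX R [set: bool] :|: inr @: setX K K.
have colour_S v : G_colour v \in S.
  rewrite /G_colour in_setU; case: ifP => gK; apply/orP; [right | left].
    by rewrite imset_f // inE /= gK andbT -opprB; apply/KN/coset_rep_sub.
  by rewrite imset_f // !inE /= andbT coset_repK.
apply: (colorable_of colour_S G_colour_neq).
have card_inl : #|inl @: setX R [set: bool] : {set (F * bool) + (F * F)}| = (#|R| * 2)%N.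
  by rewrite card_imset ?cardsX ?cardsT ?card_bool //; move=> ? ? [].
have card_inr : #|inr @: setX K K : {set (F * bool) + (F * F)}| = (#|K| * #|K|)%N.
  by rewrite card_imset ?cardsX //; move=> ? ? [].
apply: (leq_trans (leq_card_setU _ _)); rewrite card_inl card_inr.
have := card_coset_reps q_char q_gt1 cardF; have := card_pow_fixed F q_gt1.
rewrite -/R; nia.
Qed.

End GColouring.

Lemma sqr_sum_eq (F : finFieldType) (c : F) : odd #|F| ->
  exists a b : F, a ^+ 2 + b ^+ 2 = c.
Proof.
move=> oddF; pose A := [set x ^+ 2 | x : F]; pose B := [set c - y | y in A].
have card_B : #|B| = #|A| by apply: card_imset; apply: subrI.
have card_A : (#|F| <= #|A| * 2)%N.
  pose sqr_sign (x : F) := (x ^+ 2, (enum_rank x < enum_rank (- x))%N).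
  have sqr_sign_inj : injective sqr_sign.
    move=> x y [/eqP sqr_xy rank_xy]; move: sqr_xy.
    rewrite -subr_eq0 subr_sqr mulf_eq0 subr_eq0 addr_eq0 => /orP [/eqP //| /eqP xNy].
    move: rank_xy; rewrite xNy opprK; case: (eqVneq (- y) y) => [-> //| Nyy].
    by rewrite enum_rank_ltC //; case: (_ < _)%N.
  rewrite -cardsT -(card_imset _ sqr_sign_inj) -[2%N]card_bool -cardsT -cardsX.
  apply/subset_leq_card/subsetP => _ /imsetP [x _ ->].
  by rewrite in_setX in_setT andbT; apply: imset_f.
have lt_F : (#|F| < #|A| * 2)%N.
  by rewrite ltn_neqAle card_A andbT; apply: contraTneq oddF => ->; rewrite oddM andbF.
have : (0 < #|A :&: B|)%N.
  have := subset_leq_card (subsetT (A :|: B)); rewrite cardsU card_B.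
  by move: lt_F; rewrite -cardsT; lia.
case/card_gt0P => _ /setIP [/imsetP [a _ ->] /imsetP [_ /imsetP [b _ ->] eq_ab]].
by exists a, b; rewrite eq_ab subrK.
Qed.

Definition i0 : 'I_3 := @Ordinal 3 0 isT.
Definition i1 : 'I_3 := @Ordinal 3 1 isT.
Definition i2 : 'I_3 := @Ordinal 3 2 isT.

Lemma row3P (R : Type) (u w : 'rV[R]_3) :
  u 0 i0 = w 0 i0 -> u 0 i1 = w 0 i1 -> u 0 i2 = w 0 i2 -> u = w.
Proof.
move=> eq0 eq1 eq2; apply/matrixP => i j; rewrite [i]ord1.
case: j => [[|[|[|//]]] lt_j].
- by rewrite (_ : Ordinal lt_j = i0) //; apply: val_inj.
- by rewrite (_ : Ordinal lt_j = i1) //; apply: val_inj.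
- by rewrite (_ : Ordinal lt_j = i2) //; apply: val_inj.
Qed.

Lemma dot3E (F : finFieldType) (u w : 'rV[F]_3) :
  dot3 u w = u 0 i0 * w 0 i0 + u 0 i1 * w 0 i1 + u 0 i2 * w 0 i2.
Proof.
rewrite /dot3 !big_ord_recl big_ord0 addr0 addrA.
by congr (_ + _ + _); congr (_ * _); congr (_ _ _); apply: val_inj.
Qed.

Lemma dot3C (F : finFieldType) (u w : 'rV[F]_3) : dot3 u w = dot3 w u.
Proof. by apply: eq_bigr => i _; rewrite mulrC. Qed.

Section ERForms.
Variables (F : fieldType) (a b : F).
Hypotheses (sum_ab : a ^+ 2 + b ^+ 2 = -1) (two : (2 : F) != 0).

Definition Pform (u : 'rV[F]_3) := a * u 0 i0 + b * u 0 i1 + u 0 i2.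
Definition Rform (u : 'rV[F]_3) := - a * u 0 i0 - b * u 0 i1 + u 0 i2.
Definition Sform (u : 'rV[F]_3) := - b * u 0 i0 + a * u 0 i1.

Let sum_ab1 : a ^+ 2 + b ^+ 2 + 1 = 0.
Proof. by rewrite sum_ab addNr. Qed.

Lemma coord_dot_forms (u w : 'rV[F]_3) :
  2 * (u 0 i0 * w 0 i0 + u 0 i1 * w 0 i1 + u 0 i2 * w 0 i2) =
  Pform u * Rform w + Rform u * Pform w - 2 * (Sform u * Sform w).
Proof.
rewrite /Pform /Rform /Sform -[LHS]subr0.
rewrite -(mulr0 (2 * (u 0 i0 * w 0 i0 + u 0 i1 * w 0 i1))) -sum_ab1; ring.
Qed.

Lemma forms_coord (u : 'rV[F]_3) :
  [/\ 2 * u 0 i0 = 2 * b * Sform u - a * (Pform u - Rform u),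
      2 * u 0 i1 = - 2 * a * Sform u - b * (Pform u - Rform u) &
      2 * u 0 i2 = Pform u + Rform u].
Proof.
rewrite /Pform /Rform /Sform; split; last by ring.
  by rewrite -[LHS]subr0 -(mulr0 (2 * u 0 i0)) -sum_ab1; ring.
by rewrite -[LHS]subr0 -(mulr0 (2 * u 0 i1)) -sum_ab1; ring.
Qed.

Lemma forms_eq_scale (u w : 'rV[F]_3) c :
  Pform u = c * Pform w -> Rform u = c * Rform w -> Sform u = c * Sform w ->
  u = c *: w.
Proof.
move=> Pu Ru Su; have [u0 u1 u2] := forms_coord u; have [w0 w1 w2] := forms_coord w.
apply: row3P; rewrite mxE; apply: (mulfI two).
- by rewrite u0 mulrCA w0 Pu Ru Su; ring.
- by rewrite u1 mulrCA w1 Pu Ru Su; ring.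
- by rewrite u2 mulrCA w2 Pu Ru; ring.
Qed.

Lemma forms_eq0 (u : 'rV[F]_3) : Pform u = 0 -> Rform u = 0 -> Sform u = 0 -> u = 0.
Proof.
by move=> Pu Ru Su; rewrite -(scale0r u); apply: forms_eq_scale; rewrite mul0r.
Qed.

End ERForms.

Section ERColouring.
Variables (F : finFieldType) (a b : F).
Hypotheses (sum_ab : a ^+ 2 + b ^+ 2 = -1) (two : (2 : F) != 0).

Local Notation P := (Pform a b).
Local Notation R := (Rform a b).
Local Notation S := (Sform a b).

Let dot3_forms (u w : 'rV[F]_3) :
  2 * dot3 u w = P u * R w + R u * P w - 2 * (S u * S w).
Proof. by rewrite dot3E (coord_dot_forms sum_ab). Qed.

Definition G_point (u : 'rV[F]_3) : F * F :=
  (S u / P u, R u / P u + (S u / P u) ^+ 2).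

Lemma G_point_adj u w : P u != 0 -> P w != 0 -> dot3 u w = 0 ->
  ((G_point u).1 + (G_point w).1) ^+ 2 = (G_point u).2 + (G_point w).2.
Proof.
move=> Pu Pw uw; have := dot3_forms u w; rewrite uw mulr0 /= => /eqP.
rewrite eq_sym subr_eq add0r => /eqP forms_uw.
have -> : R u = (2 * (S u * S w) - P u * R w) / P w.
  by apply: (mulIf Pw); rewrite divfK // -forms_uw; ring.
by field; rewrite Pu Pw.
Qed.

Lemma G_point_inj u w : P u != 0 -> P w != 0 -> G_point u = G_point w ->
  u = (P u / P w) *: w.
Proof.
move=> Pu Pw [eqS]; rewrite eqS => /addIr eqR.
apply: (forms_eq_scale sum_ab two); first by rewrite divfK.
  by rewrite -[R u](divfK Pu) eqR; field.
by rewrite -[S u](divfK Pu) eqS; field.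
Qed.

Lemma Sform_neq0 u w : P u != 0 -> P w = 0 -> w != 0 -> dot3 u w = 0 -> S w != 0.
Proof.
move=> Pu Pw w_neq0 uw; apply: contra w_neq0 => /eqP Sw.
apply/eqP/(forms_eq0 sum_ab two) => //.
have := dot3_forms u w; rewrite uw Pw Sw !(mulr0, mul0r, addr0, subr0) => /eqP.
by rewrite eq_sym mulf_eq0 (negbTE Pu) => /eqP.
Qed.

Variables (C : eqType) (gc : F * F -> C).
Hypothesis gc_proper : forall x y, x != y -> G_adj x y -> gc x != gc y.

(* P u = S u = 0 only on the isotropic line through (a, b, 1), which has no
   neighbour with P <> 0 and may therefore reuse a colour of G. *)
Definition vec_colour (u : 'rV[F]_3) : option C :=
  if P u != 0 then Some (gc (G_point u))
  else if S u != 0 then None else Some (gc (0, 0)).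

Lemma vec_colour_neq u w : u != 0 -> w != 0 -> dot3 u w = 0 ->
  (forall c, u != c *: w) -> vec_colour u != vec_colour w.
Proof.
move=> u_neq0 w_neq0 uw not_prop; have wu : dot3 w u = 0 by rewrite dot3C.
rewrite /vec_colour; have [Pu|Pu] := eqVneq (P u) 0; have [Pw|Pw] := eqVneq (P w) 0 => /=.
- have := dot3_forms u w; rewrite uw Pu Pw !(mulr0, mul0r, add0r, sub0r) => /eqP.
  rewrite eq_sym oppr_eq0 mulf_eq0 (negbTE two) /= => SuSw.
  have [Su|Su] := eqVneq (S u) 0; have [Sw|Sw] := eqVneq (S w) 0 => //=.
    have Rw : R w != 0.
      by apply: contra w_neq0 => /eqP Rw; apply/eqP/(forms_eq0 sum_ab two).
    suff /eqP : u = (R u / R w) *: w by rewrite (negbTE (not_prop _)).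
    apply: (forms_eq_scale sum_ab two).
    - by rewrite Pu Pw mulr0.
    - by rewrite divfK.
    - by rewrite Su Sw mulr0.
  by move: SuSw; rewrite mulf_eq0 (negbTE Su) (negbTE Sw).
- by rewrite (negbTE (Sform_neq0 Pw Pu u_neq0 wu)).
- by rewrite (negbTE (Sform_neq0 Pu Pw w_neq0 uw)).
have neq_uw : G_point u != G_point w.
  by apply/eqP => /(G_point_inj Pu Pw) eq_uw; move/eqP: (not_prop (P u / P w)).
have adj_uw : G_adj (G_point u) (G_point w).
  by rewrite /G_adj neq_uw; apply/eqP/G_point_adj.
by apply: contra (gc_proper neq_uw adj_uw) => /eqP [->].
Qed.

End ERColouring.

Definition line_rep (F : finFieldType) (A : ER_vertex F) : 'rV[F]_3 :=
  xchoose (existsP (valP A)).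

Lemma line_repP (F : finFieldType) (A : ER_vertex F) :
  line_rep A != 0 /\ val A = [set c *: line_rep A | c in F].
Proof. by have /andP [-> /eqP] := xchooseP (existsP (valP A)). Qed.

Lemma line_rep_in (F : finFieldType) (A : ER_vertex F) : line_rep A \in val A.
Proof. by case: (line_repP A) => _ ->; apply/imsetP; exists 1; rewrite ?scale1r. Qed.

Lemma line_rep_inj (F : finFieldType) (A B : ER_vertex F) c :
  line_rep A = c *: line_rep B -> A = B.
Proof.
move=> eqAB; have c_neq0 : c != 0.
  by apply: contraTneq (proj1 (line_repP A)) => c0; rewrite eqAB c0 scale0r eqxx.
apply: val_inj; case: (line_repP A) => _ ->; case: (line_repP B) => _ ->; rewrite eqAB.
apply/setP => x; apply/imsetP/imsetP => [[d _ ->]|[d _ ->]].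
  by exists (d * c); rewrite ?scalerA.
by exists (d / c); rewrite // scalerA divfK.
Qed.

Lemma ER_adj_dot3 (F : finFieldType) (A B : ER_vertex F) :
  ER_adj A B -> dot3 (line_rep A) (line_rep B) = 0.
Proof.
case/andP => _ /forallP/(_ (line_rep A))/forallP/(_ (line_rep B)).
by rewrite !line_rep_in => /eqP.
Qed.

Lemma ER_colorable (F : finFieldType) (a b : F) n :
  a ^+ 2 + b ^+ 2 = -1 -> (2 : F) != 0 ->
  colorable (@G_adj F) n -> colorable (@ER_adj F) n.+1.
Proof.
move=> sum_ab two /existsP [gc /forallP gc_proper].
have gc_neq x y : x != y -> G_adj x y -> gc x != gc y.
  by move=> xy adj; have /forallP/(_ y)/implyP := gc_proper x; apply; rewrite xy.
apply: (@colorable_of _ _ _ (fun A => vec_colour a b gc (line_rep A)) [set: option 'I_n]).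
- by move=> A; rewrite inE.
- move=> A B AB adj; apply: (vec_colour_neq sum_ab two gc_neq).
  + exact: (proj1 (line_repP A)).
  + exact: (proj1 (line_repP B)).
  + exact: ER_adj_dot3.
  + by move=> c; apply: contra AB => /eqP /line_rep_inj ->.
by rewrite cardsT card_option card_ord.
Qed.

Theorem theorem5p1 (p k : nat) (F : finFieldType) :
  prime p -> odd p -> (0 < k)%N -> #|F| = ((p ^ k) ^ 3)%N ->
  (chromatic_number (@G_adj F) <= 6 * (p ^ k) ^ 2)%N /\
  (chromatic_number (@ER_adj F) <= 6 * (p ^ k) ^ 2 + 1)%N.
Proof.
move=> p_prime p_odd k_gt0 cardF.
have pF : p \in [pchar F] by apply: (card_finPcharP (n := (k * 3)%N)); rewrite // expnM.
have q_char : [pchar F].-nat (p ^ k)%N by rewrite pnatX (pnatE _ p_prime) pF.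
have q_gt1 : (1 < p ^ k)%N by rewrite -(expn0 p) ltn_exp2l // prime_gt1.
have two := pchar_odd_two_neq0 pF p_odd.
have [a [b sum_ab]] : exists a b : F, a ^+ 2 + b ^+ 2 = -1.
  by apply: sqr_sum_eq; rewrite cardF !oddX p_odd !orbT.
have G_col := G_colorable q_char q_gt1 cardF two.
have le_3_6 : (3 * (p ^ k) ^ 2 <= 6 * (p ^ k) ^ 2)%N by rewrite leq_mul2r orbT.
split; first exact: leq_trans (chromatic_number_le G_col) le_3_6.
apply: leq_trans (chromatic_number_le (ER_colorable sum_ab two G_col)) _.
by rewrite addn1 ltnS.
Qed.
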